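(* Let lines in the real projective plane be in bounded general position, with associated graph $G$. Let $V$ be a convex $m$-polygon whose vertices are vertices of $G$ and whose sides lie on distinct lines of the arrangement, suppose $V$ is not an alcove and has vertex number $k>0$, and suppose an edge $e$ of $G$ forms one side of $V$. Then $e$ forms one side of a convex polygon $W$ with at most $m+1$ sides, whose vertices are vertices of $G$ and whose sides lie on distinct lines of the arrangement, having vertex number $r$ with $0\leq r<k$.
   Context: Lines in $\mathbb{R}P^2$ are in general position if no three pass through a common point, and in bounded position if all pairwise intersections lie in $\mathbb{R}^2$. The graph $G$ has as vertices the pairwise intersection points of the lines; two vertices are joined by an edge if some line of the arrangement contains both and no third vertex lies between them on that line; the edge is the closed segment joining them. An alcove is a subset $V\subset\mathbb{R}^2$ which is compact, convex and connected, whose boundary is a union of edges of $G$ belonging to distinct lines, and which contains no proper subset with these two properties. For a convex polygon $V$ whose vertices are vertices of $G$ lying on distinct lines, its vertex number is the number of vertices of $G$ lying either in the interior of $V$ or in the interior of one of the line segments forming the boundary of $V$. *)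

From HB Require Import structures.
From mathcomp Require Import all_boot all_order all_algebra.
From mathcomp Require Import all_classical all_reals all_analysis.
Set Implicit Arguments. Unset Strict Implicit. Unset Printing Implicit Defensive.
Import Order.TTheory GRing.Theory Num.Theory.
Import numFieldNormedType.Exports.
Local Open Scope ring_scope.
Local Open Scope classical_set_scope.

Section Arr.
Variable R : realType.

(* An affine line a*x + b*y = c in R^2 (nondegeneracy (a,b) <> 0 is
   required in the arrangement hypothesis). *)
Record line := Line { la : R; lb : R; lc : R }.

Definition on_line (L : line) (p : R * R) : Prop :=
  la L * p.1 + lb L * p.2 = lc L.

(* Bounded position: any two
   distinct lines meet in exactly one point of R^2 (distinct, non parallel,
   none is the line at infinity). *)
Definition bounded_general_position n (A : 'I_n -> line) : Prop :=
  (forall i, (la (A i), lb (A i)) != (0, 0)) /\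
  (forall i j, i != j -> exists! p, on_line (A i) p /\ on_line (A j) p) /\
  (forall (i j k : 'I_n) p, i != j -> j != k -> i != k ->
     on_line (A i) p -> on_line (A j) p -> on_line (A k) p -> False).

Definition is_vertex n (A : 'I_n -> line) (p : R * R) : Prop :=
  exists i j, i != j /\ on_line (A i) p /\ on_line (A j) p.

Definition lerp (a b : R * R) (t : R) : R * R :=
  (a.1 + t * (b.1 - a.1), a.2 + t * (b.2 - a.2)).

Definition open_seg (a b : R * R) : set (R * R) :=
  fun x => exists t, 0 < t < 1 /\ x = lerp a b t.

Definition closed_seg (a b : R * R) : set (R * R) :=
  fun x => exists t, 0 <= t <= 1 /\ x = lerp a b t.

Definition is_edge_on n (A : 'I_n -> line) (a b : R * R) (i : 'I_n) : Prop :=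
  is_vertex A a /\ is_vertex A b /\ a != b /\
  on_line (A i) a /\ on_line (A i) b /\
  (forall x, is_vertex A x -> ~ open_seg a b x).

Definition is_edge n (A : 'I_n -> line) (a b : R * R) : Prop :=
  exists i, is_edge_on A a b i.

Definition convex_set (S : set (R * R)) : Prop :=
  forall x y t, S x -> S y -> 0 <= t <= 1 -> S (lerp x y t).

Definition boundary (S : set (R * R)) : set (R * R) :=
  closure S `\` interior S.

Definition alcove_cand n (A : 'I_n -> line) (V : set (R * R)) : Prop :=
  compact V /\ convex_set V /\ connected V /\ interior V !=set0 /\
  exists s : seq ((R * R) * (R * R) * 'I_n),
    uniq (map snd s) /\
    (forall e, e \in s -> is_edge_on A e.1.1 e.1.2 e.2) /\
    (forall x, boundary V x <-> exists2 e, e \in s & closed_seg e.1.1 e.1.2 x).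

Definition is_alcove n (A : 'I_n -> line) (V : set (R * R)) : Prop :=
  alcove_cand A V /\ forall W, W `<` V -> ~ alcove_cand A W.

Definition det2 (u v : R * R) : R := u.1 * v.2 - u.2 * v.1.
Definition sub2 (u v : R * R) : R * R := (u.1 - v.1, u.2 - v.2).

(* p_0, ..., p_{m-1} (cyclically) are the vertices of a strictly convex
   m-gon, m >= 3, listed in cyclic order (either orientation) *)
Definition convex_polygon m (p : 'I_m -> R * R) : Prop :=
  (3 <= m)%N /\
  exists s : R, (s = 1 \/ s = -1) /\
    forall i j : 'I_m, j != i -> j != ordS i ->
      0 < s * det2 (sub2 (p (ordS i)) (p i)) (sub2 (p j) (p i)).

Definition G_polygon n (A : 'I_n -> line) m (p : 'I_m -> R * R) : Prop :=
  convex_polygon p /\ (forall i, is_vertex A (p i)) /\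
  exists sigma : 'I_m -> 'I_n, injective sigma /\
    forall i, on_line (A (sigma i)) (p i) /\ on_line (A (sigma i)) (p (ordS i)).

Definition hull m (p : 'I_m -> R * R) : set (R * R) :=
  fun x => exists w : 'I_m -> R, (forall i, 0 <= w i) /\ \sum_i w i = 1 /\
    x = (\sum_i w i * (p i).1, \sum_i w i * (p i).2).

Definition card_is (T : eqType) (S : set T) (k : nat) : Prop :=
  exists s : seq T, uniq s /\ (forall x, x \in s <-> S x) /\ size s = k.

Definition vertex_number n (A : 'I_n -> line) m (p : 'I_m -> R * R) (k : nat) : Prop :=
  card_is (fun x => is_vertex A x /\
    (interior (hull p) x \/ exists i, open_seg (p i) (p (ordS i)) x)) k.

Definition is_side m (p : 'I_m -> R * R) (a b : R * R) : Prop :=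
  exists i, (p i = a /\ p (ordS i) = b) \/ (p i = b /\ p (ordS i) = a).

End Arr.

(* Take a vertex [x] counted in the vertex number of [V]: one of the two
   lines through [x], say [L], carries no side of [V].  By general position [L]
   misses the corners of [V], and as [x] lies in [V], [L] has corners of [V] on
   both sides.  Since [ab] is an edge of [G], [L] does not cross it, so we may
   orient [L] with [a] and [b] on its positive side.  Keep the maximal cyclic run
   of positive corners around [ab] and close it with the two points where [L]
   crosses the sides of [V] leaving the run: this is a convex polygon [W] with at
   most [m + 1] sides, one on [L].  Every vertex counted for [W] is counted for
   [V], while the first crossing point is counted for [V] (it lies inside a side
   of [V]) but is a corner of [W]. *)

From HB Require Import structures.
From mathcomp Require Import all_boot all_order all_algebra.
From mathcomp Require Import all_classical all_reals all_analysis.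
From mathcomp Require Import ring lra zify.
Set Implicit Arguments. Unset Strict Implicit. Unset Printing Implicit Defensive.
Import Order.TTheory GRing.Theory Num.Theory.
Import numFieldNormedType.Exports.
Local Open Scope ring_scope.
Local Open Scope classical_set_scope.

Section Plane.
Variable R : realType.
Implicit Types (a b x y z : R * R) (t u : R) (L : line R).

Definition lval L y := la L * y.1 + lb L * y.2 - lc L.

Definition line_opp L : line R := Line (- la L) (- lb L) (- lc L).

Lemma lval_opp L y : lval (line_opp L) y = - lval L y.
Proof. rewrite /lval /=; ring. Qed.

Definition orient (s : R) a b y := s * det2 (sub2 b a) (sub2 y a).

Definition orient_line (s : R) a b : line R :=
  Line (- s * (b.2 - a.2)) (s * (b.1 - a.1)) (s * ((b.1 - a.1) * a.2 - (b.2 - a.2) * a.1)).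

Lemma orientE s a b y : orient s a b y = lval (orient_line s a b) y.
Proof. rewrite /orient /lval /det2 /sub2 /=; ring. Qed.

Lemma on_lineE L y : on_line L y <-> lval L y = 0.
Proof.
rewrite /on_line /lval; split=> [->|/eqP]; first by rewrite subrr.
by rewrite subr_eq0 => /eqP.
Qed.

Lemma lval_lerp L a b t : lval L (lerp a b t) = lval L a + t * (lval L b - lval L a).
Proof. rewrite /lval /lerp /=; ring. Qed.

Lemma on_line_lerp L a b t : on_line L a -> on_line L b -> on_line L (lerp a b t).
Proof. rewrite !on_lineE lval_lerp => -> ->; ring. Qed.

Lemma orient_lerp s a b c d t :
  orient s a b (lerp c d t) = orient s a b c + t * (orient s a b d - orient s a b c).
Proof. by rewrite !orientE lval_lerp. Qed.

Lemma orient_lerp_tail s a b y u : orient s (lerp a b u) b y = (1 - u) * orient s a b y.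
Proof. rewrite /orient /lerp /det2 /sub2 /=; ring. Qed.

Lemma orient_lerp_head s a b y u : orient s a (lerp a b u) y = u * orient s a b y.
Proof. rewrite /orient /lerp /det2 /sub2 /=; ring. Qed.

Lemma orient_to_lerp s a b q u : orient s q (lerp a b u) b = (1 - u) * orient s a b q.
Proof. rewrite /orient /lerp /det2 /sub2 /=; ring. Qed.

Lemma orient_tail s a b : orient s a b a = 0.
Proof. rewrite /orient /det2 /sub2 /=; ring. Qed.

Lemma orient_head s a b : orient s a b b = 0.
Proof. rewrite /orient /det2 /sub2 /=; ring. Qed.

(* Both affine forms vanish on the line through [q1] and [q2], so they are
   proportional. *)
Lemma orient_lval_swap s L q1 q2 y z : lval L q1 = 0 -> lval L q2 = 0 ->
  orient s q2 q1 y * lval L z = orient s q2 q1 z * lval L y.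
Proof.
move=> h1 h2; apply/eqP; rewrite -subr_eq0; apply/eqP.
have -> : orient s q2 q1 y * lval L z - orient s q2 q1 z * lval L y =
  s * ((lval L q1 - lval L q2) * det2 (sub2 z q2) (sub2 y q2) +
     lval L q2 * (det2 (sub2 q1 q2) (sub2 y q2) - det2 (sub2 q1 q2) (sub2 z q2))).
  by rewrite /orient /lval /det2 /sub2 /=; ring.
by rewrite h1 h2; ring.
Qed.

Lemma det2_collinear L a b y : (la L, lb L) != (0, 0) ->
  on_line L a -> on_line L b -> on_line L y -> det2 (sub2 b a) (sub2 y a) = 0.
Proof.
move=> nz; rewrite !on_lineE /lval /det2 /sub2 /= => ha hb hy.
have eb : la L * (b.1 - a.1) + lb L * (b.2 - a.2) = 0.
  have -> : la L * (b.1 - a.1) + lb L * (b.2 - a.2) =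
    (la L * b.1 + lb L * b.2 - lc L) - (la L * a.1 + lb L * a.2 - lc L) by ring.
  by rewrite ha hb subrr.
have ey : la L * (y.1 - a.1) + lb L * (y.2 - a.2) = 0.
  have -> : la L * (y.1 - a.1) + lb L * (y.2 - a.2) =
    (la L * y.1 + lb L * y.2 - lc L) - (la L * a.1 + lb L * a.2 - lc L) by ring.
  by rewrite ha hy subrr.
set D := _ - _.
have hla : la L * D = 0.
  transitivity ((y.2 - a.2) * (la L * (b.1 - a.1) + lb L * (b.2 - a.2)) -
                (b.2 - a.2) * (la L * (y.1 - a.1) + lb L * (y.2 - a.2))).
    by rewrite /D; ring.
  by rewrite eb ey; ring.
have hlb : lb L * D = 0.
  transitivity ((b.1 - a.1) * (la L * (y.1 - a.1) + lb L * (y.2 - a.2)) -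
                (y.1 - a.1) * (la L * (b.1 - a.1) + lb L * (b.2 - a.2))).
    by rewrite /D; ring.
  by rewrite eb ey; ring.
apply/eqP; apply: contraNT nz => Dn0.
move/eqP: hla; rewrite mulf_eq0 (negbTE Dn0) orbF => /eqP ->.
by move/eqP: hlb; rewrite mulf_eq0 (negbTE Dn0) orbF => /eqP ->.
Qed.

Lemma ratio_in01 (fa fb : R) : fa * fb < 0 -> 0 < fa / (fa - fb) < 1.
Proof.
move=> ab.
have Dn : fa - fb != 0.
  by rewrite subr_eq0; apply: contraTneq ab => ->; rewrite -expr2 -leNgt sqr_ge0.
have e1 : fa / (fa - fb) * (fa - fb) = fa by rewrite divfK.
have e2 : (1 - fa / (fa - fb)) * (fa - fb) = - fb by rewrite mulrBl e1 mul1r; ring.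
move: e1 e2; set u := fa / (fa - fb) => e1 e2.
have [a0|a0|a0] := ltgtP fa 0.
- have b0 : 0 < fb by nra.
  apply/andP; split; nra.
- have b0 : fb < 0 by nra.
  apply/andP; split; nra.
- by move: ab; rewrite a0 mul0r ltxx.
Qed.

Lemma lerp_lerp a b c d u v t : lerp (lerp c d v) (lerp a b u) t =
  (t * (1 - u) * a.1 + t * u * b.1 + (1 - t) * (1 - v) * c.1 + (1 - t) * v * d.1,
   t * (1 - u) * a.2 + t * u * b.2 + (1 - t) * (1 - v) * c.2 + (1 - t) * v * d.2).
Proof. rewrite /lerp /=; congr (_, _); ring. Qed.

Lemma open_seg_sym a b x : open_seg a b x -> open_seg b a x.
Proof.
case=> t [/andP [t0 t1] ->]; exists (1 - t); split; first by apply/andP; lra.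
rewrite /lerp /=; congr (_, _); ring.
Qed.

Lemma open_seg_lerp_tail a b x u : 0 < u < 1 -> open_seg (lerp a b u) b x -> open_seg a b x.
Proof.
move=> /andP [u0 u1] [t [/andP [t0 t1] ->]]; exists (u + t * (1 - u)); split.
  apply/andP; split; nra.
by rewrite /lerp /=; congr (_, _); ring.
Qed.

Lemma open_seg_lerp_head a b x u : 0 < u < 1 -> open_seg a (lerp a b u) x -> open_seg a b x.
Proof.
move=> /andP [u0 u1] [t [/andP [t0 t1] ->]]; exists (t * u); split.
  apply/andP; split; nra.
by rewrite /lerp /=; congr (_, _); ring.
Qed.

Lemma lerp_eq_tail a b t : t != 0 -> lerp a b t = a -> b = a.
Proof.
case: a b => a1 a2 [b1 b2]; rewrite /lerp /= => t0 -[e1 e2].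
have h1 : t * (b1 - a1) = 0 by apply: (addrI a1); rewrite addr0.
have h2 : t * (b2 - a2) = 0 by apply: (addrI a2); rewrite addr0.
move/eqP: h1; rewrite mulf_eq0 (negbTE t0) subr_eq0 => /eqP ->.
by move/eqP: h2; rewrite mulf_eq0 (negbTE t0) subr_eq0 => /eqP ->.
Qed.

Lemma lerp_eq_head a b t : t != 1 -> lerp a b t = b -> b = a.
Proof.
move=> t1 e; apply/esym; apply: (@lerp_eq_tail b a (1 - t)); first by rewrite subr_eq0 eq_sym.
by rewrite -{2}e; case: a b {e} => ? ? [? ?]; rewrite /lerp /=; congr (_, _); ring.
Qed.

Lemma nbhs_boxP x (P : set (R * R)) : nbhs x P <->
  exists2 e : R, 0 < e & forall y, `|x.1 - y.1| < e -> `|x.2 - y.2| < e -> P y.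
Proof.
split=> [/nbhs_ballP [e /= e0 H]|[e e0 H]].
  by exists e => // y h1 h2; apply: H; split.
by apply/nbhs_ballP; exists e => //= y [/= h1 h2]; apply: H.
Qed.

(* Moving from [x] against the gradient [(la L, lb L)] stays inside [S]. *)
Lemma interior_lval_gt0 (S : set (R * R)) L x : (la L, lb L) != (0, 0) ->
  (forall y, S y -> 0 <= lval L y) -> interior S x -> 0 < lval L x.
Proof.
move=> nz Sge /nbhs_boxP [e e0 He]; rewrite ltNge; apply/negP => hle.
set K := `|la L| + `|lb L| + 1.
have K0 : 0 < K by rewrite /K; have := normr_ge0 (la L); have := normr_ge0 (lb L); lra.
set t := e / (2 * K).
have t0 : 0 < t by rewrite /t divr_gt0 // mulr_gt0.
have tK : t * K = e / 2 by rewrite /t; field; lra.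
have q2 : 0 < la L ^+ 2 + lb L ^+ 2.
  move: nz; rewrite xpair_eqE negb_and => /orP [] nz.
    have := sqr_ge0 (lb L); have : 0 < la L ^+ 2 by rewrite exprn_even_gt0.
    lra.
  have := sqr_ge0 (la L); have : 0 < lb L ^+ 2 by rewrite exprn_even_gt0.
  lra.
set y := (x.1 - t * la L, x.2 - t * lb L).
have hy : lval L y = lval L x - t * (la L ^+ 2 + lb L ^+ 2) by rewrite /lval /y /=; ring.
have h1 : `|x.1 - y.1| < e.
  rewrite /y /= opprB addrC subrK normrM (gtr0_norm t0).
  have : `|la L| <= K by rewrite /K; have := normr_ge0 (lb L); lra.
  have := normr_ge0 (la L); nra.
have h2 : `|x.2 - y.2| < e.
  rewrite /y /= opprB addrC subrK normrM (gtr0_norm t0).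
  have : `|lb L| <= K by rewrite /K; have := normr_ge0 (la L); lra.
  have := normr_ge0 (lb L); nra.
have := Sge _ (He _ h1 h2); rewrite hy.
have : 0 < t * (la L ^+ 2 + lb L ^+ 2) by rewrite mulr_gt0.
lra.
Qed.

End Plane.

Section Hull.
Variables (R : realType) (m : nat) (p : 'I_m -> R * R).
Implicit Types (L : line R) (x y : R * R).

Lemma hull_comb (I : finType) (y : I -> R * R) (c : I -> R) :
  (forall i, 0 <= c i) -> \sum_i c i = 1 -> (forall i, hull p (y i)) ->
  hull p (\sum_i c i * (y i).1, \sum_i c i * (y i).2).
Proof.
move=> c0 c1 hy; have /choice [w Hw] := hy.
exists (fun j => \sum_i c i * w i j); split; [|split].
- move=> j; apply: sumr_ge0 => i _; apply: mulr_ge0 => //; by case: (Hw i).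
- rewrite exchange_big /= -c1; apply: eq_bigr => i _.
  by rewrite -mulr_sumr; case: (Hw i) => _ [-> _]; rewrite mulr1.
- have E (k : bool) : \sum_i c i * (if k then (y i).1 else (y i).2) =
     \sum_j (\sum_i c i * w i j) * (if k then (p j).1 else (p j).2).
    under [RHS]eq_bigr do rewrite mulr_suml.
    rewrite exchange_big /=; apply: eq_bigr => i _.
    case: (Hw i) => _ [_ ->]; case: k => /=; rewrite mulr_sumr;
      by apply: eq_bigr => j _; rewrite mulrA.
  by rewrite (E true) (E false).
Qed.

Lemma hull_corner i : hull p (p i).
Proof.
exists (fun j => (j == i)%:R); split; [|split].
- by move=> j; rewrite ler0n.
- by rewrite (bigD1 i) //= eqxx big1 ?addr0 // => j /negPf ->.
- rewrite (bigD1 i) //= eqxx mul1r big1 ?addr0; last by move=> j /negPf ->; rewrite mul0r.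
  rewrite (bigD1 i) //= eqxx mul1r big1 ?addr0; last by move=> j /negPf ->; rewrite mul0r.
  by case: (p i).
Qed.

Lemma hull_lerp a b t : hull p a -> hull p b -> 0 <= t <= 1 -> hull p (lerp a b t).
Proof.
move=> ha hb /andP [t0 t1].
have -> : lerp a b t = (t * b.1 + (1 - t) * a.1, t * b.2 + (1 - t) * a.2).
  by rewrite /lerp; congr (_, _); ring.
have := @hull_comb bool (fun k => if k then b else a) (fun k => if k then t else 1 - t).
rewrite !big_bool /=; apply.
- by case=> //; lra.
- by rewrite addrC subrK.
- by case.
Qed.

Lemma hull_lval_sum L (w : 'I_m -> R) : \sum_i w i = 1 ->
  lval L (\sum_i w i * (p i).1, \sum_i w i * (p i).2) = \sum_i w i * lval L (p i).
Proof.
move=> w1; rewrite /lval /=.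
rewrite [RHS](eq_bigr (fun i => la L * (w i * (p i).1) + lb L * (w i * (p i).2) - lc L * w i)).
  by rewrite !big_split /= sumrN -!mulr_sumr w1 mulr1.
by move=> i _; ring.
Qed.

Lemma hull_lval_ge0 L x : (forall i, 0 <= lval L (p i)) -> hull p x -> 0 <= lval L x.
Proof.
move=> H [w [w0 [w1 ->]]]; rewrite hull_lval_sum //.
by apply: sumr_ge0 => i _; apply: mulr_ge0.
Qed.

Lemma hull_lval_gt0 L x : (forall i, 0 < lval L (p i)) -> hull p x -> 0 < lval L x.
Proof.
move=> H [w [w0 [w1 ->]]]; rewrite hull_lval_sum //.
have wL0 i : 0 <= w i * lval L (p i) by apply: mulr_ge0 => //; apply: ltW.
rewrite lt0r sumr_ge0 ?andbT //; apply/eqP => /(psumr_eq0P (fun i _ => wL0 i)) h.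
have : \sum_i w i = 0.
  apply: big1 => i _; have /eqP := h i isT; rewrite mulf_eq0 => /orP [/eqP //|/eqP e].
  by have := H i; rewrite e ltxx.
by rewrite w1 => /eqP; rewrite oner_eq0.
Qed.

Lemma hull_comb4 (y0 y1 y2 y3 : R * R) (c0 c1 c2 c3 : R) :
  hull p y0 -> hull p y1 -> hull p y2 -> hull p y3 ->
  0 <= c0 -> 0 <= c1 -> 0 <= c2 -> 0 <= c3 -> c0 + c1 + c2 + c3 = 1 ->
  hull p (c0 * y0.1 + c1 * y1.1 + c2 * y2.1 + c3 * y3.1,
          c0 * y0.2 + c1 * y1.2 + c2 * y2.2 + c3 * y3.2).
Proof.
move=> h0 h1 h2 h3 p0 p1 p2 p3 s1.
have := @hull_comb 'I_4 (fun i => nth y0 [:: y0; y1; y2; y3] i)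
  (fun i => nth 0 [:: c0; c1; c2; c3] i).
rewrite !big_ord_recr !big_ord0 /= !add0r; apply => //.
- by case=> [[|[|[|[|]]]] ?].
- by case=> [[|[|[|[|]]]] ?].
Qed.

End Hull.

Section Interior.
Variable R : realType.
Implicit Types (d u v w : R * R).

Lemma cramer2 u v d : det2 u v != 0 ->
  d = (det2 d v / det2 u v * u.1 + det2 u d / det2 u v * v.1,
       det2 d v / det2 u v * u.2 + det2 u d / det2 u v * v.2).
Proof.
move=> Dn0; rewrite [LHS]surjective_pairing /det2 in Dn0 *.
by congr (_, _); field.
Qed.

Lemma norm_det2_le d w : `|det2 d w| <= (`|d.1| + `|d.2|) * (`|w.1| + `|w.2|).
Proof.
rewrite /det2; apply: le_trans (ler_normB _ _) _; rewrite !normrM.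
have := normr_ge0 d.1; have := normr_ge0 d.2.
have := normr_ge0 w.1; have := normr_ge0 w.2; nra.
Qed.

(* Small perturbations of a point with positive weights on three affinely
   independent points [y0, y1, y2] are obtained by perturbing those weights. *)
Lemma interior_hull_comb4 m (p : 'I_m -> R * R) (y0 y1 y2 y3 : R * R) (c0 c1 c2 c3 : R) :
  hull p y0 -> hull p y1 -> hull p y2 -> hull p y3 ->
  0 < c0 -> 0 < c1 -> 0 < c2 -> 0 <= c3 -> c0 + c1 + c2 + c3 = 1 ->
  det2 (sub2 y1 y0) (sub2 y2 y0) != 0 ->
  interior (hull p) (c0 * y0.1 + c1 * y1.1 + c2 * y2.1 + c3 * y3.1,
                     c0 * y0.2 + c1 * y1.2 + c2 * y2.2 + c3 * y3.2).
Proof.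
move=> h0 h1 h2 h3 p0 p1 p2 p3 s1 Dn0.
set u := sub2 y1 y0; set v := sub2 y2 y0; set D := det2 u v; set x0 := (_, _).
set ka := Num.min c0 (Num.min c1 c2).
have ka0 : 0 < ka by rewrite /ka !lt_min p0 p1 p2.
have [kac0 kac1 kac2] : [/\ ka <= c0, ka <= c1 & ka <= c2].
  by rewrite /ka !ge_min !lexx !orbT.
set M := `|u.1| + `|u.2| + `|v.1| + `|v.2| + 1.
have M0 : 0 < M.
  rewrite /M; have := normr_ge0 u.1; have := normr_ge0 u.2;
  have := normr_ge0 v.1; have := normr_ge0 v.2; lra.
have aD0 : 0 < `|D| by rewrite normr_gt0.
set e := ka * `|D| / (4 * M).
have e0 : 0 < e by rewrite /e divr_gt0 ?mulr_gt0.
apply/nbhs_boxP; exists e => // y hy1 hy2.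
set d := sub2 y x0.
have hd : `|d.1| + `|d.2| <= 2 * e by rewrite /d /= -!(distrC x0.1) -!(distrC x0.2); lra.
have small w : `|w.1| + `|w.2| <= M -> `|det2 d w / D| <= ka / 2.
  move=> hw; rewrite normrM normfV ler_pdivrMr //.
  apply: le_trans (norm_det2_le d w) _.
  have -> : ka / 2 * `|D| = 2 * e * M by rewrite /e; field; lra.
  by apply: ler_pM => //; apply: addr_ge0.
have hal : `|det2 d v / D| <= ka / 2.
  by apply: small; rewrite /M; have := normr_ge0 u.1; have := normr_ge0 u.2; lra.
have hbe : `|det2 u d / D| <= ka / 2.
  have -> : det2 u d = - det2 d u by rewrite /det2; ring.
  rewrite mulNr normrN; apply: small.
  by rewrite /M; have := normr_ge0 v.1; have := normr_ge0 v.2; lra.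
move: hal hbe (cramer2 d Dn0); rewrite -/D.
set al := det2 d v / D; set be := det2 u d / D => hal hbe ed.
have -> : y = ((c0 - al - be) * y0.1 + (c1 + al) * y1.1 + (c2 + be) * y2.1 + c3 * y3.1,
   (c0 - al - be) * y0.2 + (c1 + al) * y1.2 + (c2 + be) * y2.2 + c3 * y3.2).
  have e1 : d.1 = al * u.1 + be * v.1 by rewrite {1}ed.
  have e2 : d.2 = al * u.2 + be * v.2 by rewrite {1}ed.
  rewrite [y in LHS]surjective_pairing; congr (_, _).
    by transitivity (x0.1 + d.1); [rewrite /d /sub2 /=; ring|rewrite e1 /x0 /u /v /sub2 /=; ring].
  by transitivity (x0.2 + d.2); [rewrite /d /sub2 /=; ring|rewrite e2 /x0 /u /v /sub2 /=; ring].
have := ler_norm al; have : - al <= `|al| by rewrite -normrN ler_norm.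
have := ler_norm be; have : - be <= `|be| by rewrite -normrN ler_norm.
by move=> *; apply: hull_comb4 => //; lra.
Qed.

End Interior.

Lemma neq_modD m a d1 d2 : (d1 != d2)%N -> (d1 < d2 + m)%N -> (d2 < d1 + m)%N ->
  ((a + d1) %% m != (a + d2) %% m)%N.
Proof.
have lt_neq d d' : (d < d' < d + m)%N -> ((a + d') %% m != (a + d) %% m)%N.
  move=> /andP [h1 h2]; apply/negP => h.
  have e : (a + d' = (a + d) + (d' - d))%N by lia.
  have : ((a + d) + (d' - d) == (a + d) + 0 %[mod m])%N by rewrite addn0 -e.
  by rewrite eqn_modDl mod0n modn_small; lia.
move=> ne h1 h2; case: (ltngtP d1 d2) ne => // h _.
  by rewrite eq_sym; apply: lt_neq; rewrite h.
by apply: lt_neq; rewrite h.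
Qed.

Lemma ordS_neq m (i : 'I_m) : (1 < m)%N -> ordS i != i.
Proof.
rewrite -val_eqE /=; move: (nat_of_ord i) (ltn_ord i) => k k_lt m_gt1.
case: (ltngtP k.+1 m) k_lt => [lt|//|e] _; first by rewrite modn_small //; lia.
by rewrite -e modnn; lia.
Qed.

Section PositiveRun.
Variables (R : realType) (F : nat -> R) (m i0 : nat).
Hypotheses (i0_lt : (i0 < m)%N) (F_neq0 : forall l, F l != 0).
Hypothesis F_periodic : forall l l', (l %% m = l' %% m)%N -> F l = F l'.
Hypotheses (F_i0 : 0 < F i0) (F_i0S : 0 < F i0.+1).

Let F_periodicD l : F (l + m) = F l.
Proof. by apply: F_periodic; rewrite modnDr. Qed.

(* The run is cut out by the last negative value at or before [i0 + m] and
   the first one after it. *)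
Lemma positive_run : (exists l, F l < 0) ->
  exists j c, [/\ (1 < c < m)%N, F j < 0, F (j + c).+1 < 0,
    forall l, (0 < l <= c)%N -> 0 < F (j + l) &
    exists2 e, (0 < e < c)%N & (j + e = i0 + m)%N].
Proof.
case=> l Fl; pose r := (l %% m)%N.
have rm : (r < m)%N by rewrite ltn_pmod //; lia.
have Fr : F r < 0 by rewrite (F_periodic (l' := l)) // modn_mod.
have exP : exists t, (i0 < t <= i0 + m)%N && (F t < 0).
  exists (if (i0 < r)%N then r else r + m); case: ifP => h.
    by rewrite Fr andbT; lia.
  by rewrite F_periodicD Fr andbT; lia.
have ubP t : (i0 < t <= i0 + m)%N && (F t < 0) -> (t <= i0 + m)%N.
  by case/andP => /andP [].
case: (ex_maxnP exP ubP) => j /andP [/andP [j_lo j_hi] Fj] j_max.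
have exQ : exists t, (i0 + m < t)%N && (F t < 0).
  by exists (j + m); rewrite F_periodicD Fj andbT; lia.
case: (ex_minnP exQ) => j' /andP [j'_lo Fj'] j'_min.
have j'_le : (j' <= j + m)%N by apply: j'_min; rewrite F_periodicD Fj andbT; lia.
have j_lt : (j < i0 + m)%N.
  rewrite ltn_neqAle j_hi andbT; apply: contraTneq Fj => ->.
  by rewrite F_periodicD -leNgt ltW.
have j'_gt : ((i0 + m).+1 < j')%N.
  rewrite ltn_neqAle j'_lo andbT; apply: contraTneq Fj' => <-.
  by rewrite -addSn F_periodicD -leNgt ltW.
have pos t : (j < t < j')%N -> 0 < F t.
  move=> ht; rewrite lt_neqAle eq_sym F_neq0 /= leNgt; apply/negP => Ft.
  case: (leqP t (i0 + m)) => h.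
    by have := j_max t; rewrite Ft andbT h; lia.
  by have := j'_min t; rewrite Ft andbT h; lia.
exists j, (j' - j - 1)%N; split.
- lia.
- exact: Fj.
- by rewrite (_ : (j + (j' - j - 1)).+1 = j')%N //; lia.
- by move=> t ht; apply: pos; lia.
- by exists (i0 + m - j)%N; lia.
Qed.

End PositiveRun.

Section ConvexPolygon.
Variables (R : realType) (m : nat) (p : 'I_m -> R * R) (s : R).
Hypothesis m_gt2 : (2 < m)%N.
Hypothesis p_convex : forall i j : 'I_m, j != i -> j != ordS i ->
  0 < orient s (p i) (p (ordS i)) (p j).

Definition cyc (k : nat) : 'I_m := Ordinal (ltn_pmod k (ltnW (ltnW m_gt2))).
Definition corner k := p (cyc k).
Definition side_orient k y := orient s (corner k) (corner k.+1) y.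

Lemma cyc_ord (i : 'I_m) : cyc i = i.
Proof. by apply: val_inj; rewrite /= modn_small. Qed.

Lemma corner_ord (i : 'I_m) : corner i = p i.
Proof. by rewrite /corner cyc_ord. Qed.

Lemma ordS_cyc k : ordS (cyc k) = cyc k.+1.
Proof. by apply: val_inj; rewrite /= -addn1 modnDml addn1. Qed.

Lemma corner_ordS (i : 'I_m) : corner i.+1 = p (ordS i).
Proof. by rewrite /corner -ordS_cyc cyc_ord. Qed.

Lemma eq_cyc k l : (cyc k == cyc l) = (k %% m == l %% m)%N.
Proof. by rewrite -val_eqE. Qed.

Lemma corner_mod k l : (k %% m = l %% m)%N -> corner k = corner l.
Proof. by move=> e; rewrite /corner; congr p; apply: val_inj. Qed.

Lemma side_orient_gt0 k l : (l %% m != k %% m)%N -> (l %% m != k.+1 %% m)%N ->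
  0 < side_orient k (corner l).
Proof.
move=> h1 h2; rewrite /side_orient /corner -ordS_cyc.
by apply: p_convex; rewrite ?ordS_cyc eq_cyc.
Qed.

Lemma side_orient_corner_ge0 k l : 0 <= side_orient k (corner l).
Proof.
case: (eqVneq (l %% m) (k %% m))%N => [e|h1].
  by rewrite (corner_mod e) /side_orient orient_tail.
case: (eqVneq (l %% m) (k.+1 %% m))%N => [e|h2].
  by rewrite (corner_mod e) /side_orient orient_head.
exact/ltW/side_orient_gt0.
Qed.

Lemma side_orient_next k : 0 < side_orient k (corner k.+2).
Proof.
apply: side_orient_gt0.
  by have := @neq_modD m k 2 0; rewrite addn0 addn2; apply; lia.
by have := @neq_modD m k 2 1; rewrite addn1 addn2; apply; lia.
Qed.

Lemma side_orient_hull k y : hull p y -> 0 <= side_orient k y.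
Proof.
rewrite /side_orient orientE => h; apply: hull_lval_ge0 h => i.
by rewrite -orientE -corner_ord; apply: side_orient_corner_ge0.
Qed.

Lemma side_orient_interior k y : interior (hull p) y -> 0 < side_orient k y.
Proof.
rewrite /side_orient orientE => h; apply: interior_lval_gt0 h; last first.
  by move=> z hz; rewrite -orientE; apply: side_orient_hull.
set L := orient_line _ _ _; apply/negP; rewrite xpair_eqE => /andP [/eqP la0 /eqP lb0].
have const z : lval L z = - lc L by rewrite /lval la0 lb0 !mul0r add0r sub0r.
have := side_orient_next k; have := orient_tail s (corner k) (corner k.+1).
by rewrite /side_orient !orientE -/L !const => ->; rewrite ltxx.
Qed.

Lemma side_orient_open_side k a u : (a %% m != k %% m)%N -> 0 < u < 1 ->
  0 < side_orient k (lerp (corner a) (corner a.+1) u).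
Proof.
move=> ha /andP [u0 u1]; rewrite /side_orient orient_lerp -!/(side_orient k _).
have g0 := side_orient_corner_ge0 k a; have g1 := side_orient_corner_ge0 k a.+1.
suff : 0 < side_orient k (corner a) \/ 0 < side_orient k (corner a.+1) by nra.
case: (eqVneq (a %% m) (k.+1 %% m))%N => [e|h2]; last by left; apply: side_orient_gt0.
right; rewrite (@corner_mod a.+1 k.+2); first exact: side_orient_next.
by rewrite -addn1 -modnDml e modnDml addn1.
Qed.

Lemma corner_neq_next k : corner k.+1 != corner k.
Proof.
apply: contraTneq (side_orient_next k) => e.
by rewrite /side_orient e /orient /sub2 /det2 /= !subrr !mul0r subrr mulr0 ltxx.
Qed.

Lemma corner_not_counted (j : 'I_m) :
  ~ (interior (hull p) (p j) \/ exists i, open_seg (p i) (p (ordS i)) (p j)).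
Proof.
case=> [/(side_orient_interior j)|[i [t [/andP [t0 t1] e]]]].
  by rewrite /side_orient -corner_ord orient_tail ltxx.
have := corner_neq_next i; rewrite corner_ordS corner_ord.
case: (eqVneq j i) => [ji|nji].
  by subst j; rewrite (lerp_eq_tail (negbT (gt_eqF t0)) (esym e)) eqxx.
case: (eqVneq j (ordS i)) => [ji|nji2].
  by subst j; rewrite (lerp_eq_head (negbT (lt_eqF t1)) (esym e)) eqxx.
have := p_convex nji nji2; rewrite e orient_lerp orient_tail orient_head.
by rewrite subrr mulr0 addr0 ltxx.
Qed.

End ConvexPolygon.

(* [vertex_number A p k] is [card_is (counted A p) k]. *)
Definition counted (R : realType) n (A : 'I_n -> line R) m (p : 'I_m -> R * R) x :=
  is_vertex A x /\ (interior (hull p) x \/ exists i, open_seg (p i) (p (ordS i)) x).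

Section Cut.
Variables (R : realType) (n : nat) (A : 'I_n -> line R) (m : nat) (V : 'I_m -> R * R).
Variables (s : R) (sigma : 'I_m -> 'I_n) (L : 'I_n) (ep : R) (j c : nat).
Hypothesis m_gt2 : (2 < m)%N.
Hypothesis V_convex : forall i k : 'I_m, k != i -> k != ordS i ->
  0 < orient s (V i) (V (ordS i)) (V k).
Hypothesis s_sign : s = 1 \/ s = -1.
Hypothesis V_vertex : forall i, is_vertex A (V i).
Hypothesis sigma_inj : injective sigma.
Hypothesis sigma_on : forall i,
  on_line (A (sigma i)) (V i) /\ on_line (A (sigma i)) (V (ordS i)).
Hypothesis L_new : forall k, L != sigma k.
Hypothesis ep_neq0 : ep != 0.

Local Notation corner := (corner V m_gt2).
Local Notation cyc := (cyc m_gt2).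
Local Notation side_orient := (side_orient V s m_gt2).

Definition height k := ep * lval (A L) (corner k).
Definition cut_param k := height k / (height k - height k.+1).
Definition crossing k := lerp (corner k) (corner k.+1) (cut_param k).

Lemma sides_on k : on_line (A (sigma (cyc k))) (corner k) /\
  on_line (A (sigma (cyc k))) (corner k.+1).
Proof. by rewrite /corner -ordS_cyc; apply: sigma_on. Qed.

Lemma crossing_on_side k : on_line (A (sigma (cyc k))) (crossing k).
Proof. by case: (sides_on k) => h1 h2; apply: on_line_lerp. Qed.

Section SignChange.
Variable k : nat.
Hypothesis height_change : height k * height k.+1 < 0.

Lemma cut_param01 : 0 < cut_param k < 1.
Proof. exact: ratio_in01. Qed.

Lemma crossing_on_L : lval (A L) (crossing k) = 0.
Proof.
have Dn : height k - height k.+1 != 0.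
  by rewrite subr_eq0; apply: contraTneq height_change => ->; rewrite -expr2 -leNgt sqr_ge0.
apply: (mulfI ep_neq0); rewrite mulr0.
transitivity (height k + cut_param k * (height k.+1 - height k)).
  by rewrite /crossing lval_lerp /height; ring.
by rewrite /cut_param; field.
Qed.

Lemma crossing_vertex : is_vertex A (crossing k).
Proof.
exists L, (sigma (cyc k)); split; first exact: L_new.
by split; [apply/on_lineE/crossing_on_L|apply: crossing_on_side].
Qed.

End SignChange.

Hypotheses (c_gt1 : (1 < c)%N) (c_lt : (c < m)%N).
Hypotheses (height_entry_neg : height j < 0) (height_exit_neg : height (j + c).+1 < 0).
Hypothesis height_run_pos : forall l, (0 < l <= c)%N -> 0 < height (j + l).

Lemma height_change_entry : height j * height j.+1 < 0.
Proof. by rewrite pmulr_llt0 // -addn1; apply: height_run_pos; lia. Qed.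

Lemma height_change_exit : height (j + c) * height (j + c).+1 < 0.
Proof. by rewrite pmulr_rlt0 //; apply: height_run_pos; lia. Qed.

Definition entry := crossing j.
Definition exit := crossing (j + c).

Definition cut_pt l :=
  if l == 0%N then entry else if l == c.+1 then exit else corner (j + l).

Definition cut_poly (i : 'I_c.+2) := cut_pt i.

Definition cut_line (i : 'I_c.+2) : 'I_n :=
  if (i : nat) == c.+1 then L else sigma (cyc (j + i)).

Lemma cut_pt_mid l : (0 < l <= c)%N -> cut_pt l = corner (j + l).
Proof.
by move=> /andP [l0 lc]; rewrite /cut_pt (negbTE (lt0n_neq0 l0)) ltn_eqF // ltnS.
Qed.

Lemma cut_pt_exit : cut_pt c.+1 = exit.
Proof. by rewrite /cut_pt eqxx. Qed.

Lemma side_orient_cut_pt i l : (i <= c)%N -> (l <= c.+1)%N -> l != i -> l != i.+1 ->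
  0 < side_orient (j + i) (cut_pt l).
Proof.
move=> hi hl li liS; rewrite /cut_pt.
case: eqP => [l0|/eqP l0].
  apply: side_orient_open_side => //; last exact/cut_param01/height_change_entry.
  by rewrite -{1}[j]addn0; apply: neq_modD; lia.
case: eqP => [lc|/eqP lc].
  apply: side_orient_open_side => //; last exact/cut_param01/height_change_exit.
  by apply: neq_modD; lia.
by apply: (side_orient_gt0 _ V_convex); rewrite -?addnS; apply: neq_modD; lia.
Qed.

Lemma orient_cut_side i : (i <= c)%N -> exists2 u, 0 < u &
  forall y, orient s (cut_pt i) (cut_pt i.+1) y = u * side_orient (j + i) y.
Proof.
move=> hi; case: (posnP i) => [->|i0].
  have /andP [u0 u1] := cut_param01 height_change_entry.
  exists (1 - cut_param j); first lra.
  by move=> y; rewrite (cut_pt_mid (l := 1)) ?addn0 ?addn1 ?orient_lerp_tail //; lia.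
rewrite (cut_pt_mid (l := i)); last lia.
case: (ltngtP i c) hi => // [ic|ic] _.
  by exists 1 => // y; rewrite (cut_pt_mid (l := i.+1)) ?addnS ?mul1r //; lia.
have /andP [u0 u1] := cut_param01 height_change_exit.
by exists (cut_param (j + c)) => // y; rewrite ic cut_pt_exit orient_lerp_head.
Qed.

(* [orient s exit entry] and [height] both vanish on [L], so they have the same
   sign at every corner as soon as they agree at one. *)
Lemma exit_entry_orient l : (0 < l <= c)%N -> 0 < orient s exit entry (corner (j + l)).
Proof.
move=> hl.
have swap := orient_lval_swap s (corner (j + l)) (corner (j + 1))
  (crossing_on_L height_change_entry) (crossing_on_L height_change_exit).
have first : 0 < orient s exit entry (corner (j + 1)).
  rewrite addn1 /entry /crossing orient_to_lerp; apply: mulr_gt0.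
    by have /andP [? ?] := cut_param01 height_change_entry; lra.
  rewrite -/(side_orient j _) -cut_pt_exit -{1}[j]addn0.
  by apply: side_orient_cut_pt; lia.
have : 0 < orient s exit entry (corner (j + 1)) * height (j + l).
  by rewrite mulr_gt0 //; apply: height_run_pos.
rewrite /height mulrCA -swap mulrCA -/(height _) pmulr_lgt0 //.
by apply: height_run_pos; lia.
Qed.

Lemma cut_convex (i k : 'I_c.+2) : k != i -> k != ordS i ->
  0 < orient s (cut_poly i) (cut_poly (ordS i)) (cut_poly k).
Proof.
rewrite /cut_poly -!val_eqE /= => ki kiS; have hi := ltn_ord i; have hk := ltn_ord k.
have [ic|ic] : (i < c.+1)%N \/ (i : nat) = c.+1 by lia.
  move: kiS; rewrite modn_small // => kiS.
  have [u u0 ->] := orient_cut_side (i := i) ltac:(lia).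
  by rewrite mulr_gt0 // side_orient_cut_pt //; lia.
move: kiS; rewrite ic modnn cut_pt_exit => k0.
by rewrite /cut_pt eqxx (negbTE k0) ifN; [apply: exit_entry_orient|]; lia.
Qed.

Lemma cut_vertex i : is_vertex A (cut_poly i).
Proof.
rewrite /cut_poly /cut_pt; case: eqP => _; first exact/crossing_vertex/height_change_entry.
by case: eqP => _; [exact/crossing_vertex/height_change_exit|exact: V_vertex].
Qed.

Lemma cut_line_inj : injective cut_line.
Proof.
move=> x y; rewrite /cut_line; have hx := ltn_ord x; have hy := ltn_ord y.
case: eqP => ex; case: eqP => ey.
- by move=> _; apply: ord_inj; rewrite ex ey.
- by move=> e; have := L_new (cyc (j + y)); rewrite e eqxx.
- by move=> e; have := L_new (cyc (j + x)); rewrite e eqxx.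
- move=> /sigma_inj /eqP; rewrite eq_cyc => e; apply: ord_inj => /=.
  by apply/eqP; apply: contraTT e => ne; apply: neq_modD; lia.
Qed.

Lemma cut_line_on i :
  on_line (A (cut_line i)) (cut_poly i) /\ on_line (A (cut_line i)) (cut_poly (ordS i)).
Proof.
rewrite /cut_line /cut_poly /=; have hi := ltn_ord i.
case: eqP => [->|/eqP ic].
  rewrite modnn cut_pt_exit /cut_pt /= !on_lineE.
  by split; apply: crossing_on_L; [exact: height_change_exit|exact: height_change_entry].
rewrite modn_small; last lia.
case: (posnP i) => [->|i0].
  rewrite addn0 (cut_pt_mid (l := 1)) ?addn1; last lia.
  by split; [apply: crossing_on_side|case: (sides_on j)].
rewrite cut_pt_mid; last lia.
case: (ltngtP i c) => [ic'|ic'|->]; last first.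
- by rewrite cut_pt_exit; split; [case: (sides_on (j + c))|apply: crossing_on_side].
- lia.
- by rewrite cut_pt_mid ?addnS; [apply: sides_on|lia].
Qed.

Lemma cut_polygon : G_polygon A cut_poly.
Proof.
split; first by split; [lia|exists s; split => //; exact: cut_convex].
split; first exact: cut_vertex.
by exists cut_line; split; [exact: cut_line_inj|exact: cut_line_on].
Qed.

Lemma cut_poly_run_side e : (0 < e < c)%N ->
  exists i : 'I_c.+2, cut_poly i = corner (j + e) /\ cut_poly (ordS i) = corner (j + e).+1.
Proof.
move=> he; have e_ord : (e < c.+2)%N by lia.
exists (Ordinal e_ord); rewrite /cut_poly /= modn_small; last lia.
by rewrite !cut_pt_mid ?addnS //; lia.
Qed.

Lemma cut_pt_hull l : hull V (cut_pt l).
Proof.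
have corner_hull k : hull V (corner k) by apply: hull_corner.
rewrite /cut_pt; case: eqP => _.
  apply: hull_lerp => //; have /andP [? ?] := cut_param01 height_change_entry.
  by apply/andP; split; lra.
case: eqP => _ //; apply: hull_lerp => //.
by have /andP [? ?] := cut_param01 height_change_exit; apply/andP; split; lra.
Qed.

Lemma hull_cut_sub : hull cut_poly `<=` hull V.
Proof. by move=> x [w [w0 [w1 ->]]]; apply: hull_comb => // i; apply: cut_pt_hull. Qed.

Lemma open_side_corner k x : open_seg (corner k) (corner k.+1) x ->
  exists i, open_seg (V i) (V (ordS i)) x.
Proof. by exists (cyc k); rewrite ordS_cyc. Qed.

Lemma closing_side_interior x : open_seg exit entry x -> interior (hull V) x.
Proof.
case=> t [/andP [t0 t1] ->].
have /andP [a0 a1] := cut_param01 height_change_entry.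
have /andP [b0 b1] := cut_param01 height_change_exit.
rewrite /exit /entry /crossing lerp_lerp.
apply: interior_hull_comb4; try exact: hull_corner.
- by rewrite mulr_gt0 // subr_gt0.
- exact: mulr_gt0.
- by rewrite !mulr_gt0 // subr_gt0.
- by rewrite mulr_ge0 ?ltW // subr_gt0.
- ring.
have : 0 < side_orient j (corner (j + c)).
  apply: (side_orient_gt0 _ V_convex).
    by rewrite -{2}[j]addn0; apply: neq_modD; lia.
  by rewrite -[j.+1]addn1; apply: neq_modD; lia.
by rewrite /side_orient /orient; apply: contraTneq => ->; rewrite mulr0 ltxx.
Qed.

Lemma counted_cut_sub : counted A cut_poly `<=` counted A V.
Proof.
move=> x [xv [xi|[i xi]]]; split => //.
  by left; move: xi; apply: filterS; apply: hull_cut_sub.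
move: xi; rewrite /cut_poly /=; have hi := ltn_ord i.
have [ic|ic] : (i : nat) = c.+1 \/ (i <= c)%N by lia.
  by rewrite ic modnn cut_pt_exit => h; left; apply: closing_side_interior.
rewrite modn_small; last lia.
move=> h; right; case: (posnP i) h => [-> | i0].
  rewrite (cut_pt_mid (l := 1)) ?addn1; last lia.
  move=> /(open_seg_lerp_tail (cut_param01 height_change_entry)).
  exact: open_side_corner.
rewrite cut_pt_mid; last lia.
case: (ltngtP i c) ic => // [ic|ic] _.
  by rewrite cut_pt_mid ?addnS; [apply: open_side_corner|lia].
rewrite ic cut_pt_exit => /(open_seg_lerp_head (cut_param01 height_change_exit)).
exact: open_side_corner.
Qed.

Lemma entry_counted : counted A V entry.
Proof.
split; first exact/crossing_vertex/height_change_entry.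
right; apply: (@open_side_corner j); exists (cut_param j); split => //.
exact/cut_param01/height_change_entry.
Qed.

Lemma entry_not_counted : ~ counted A cut_poly entry.
Proof.
case=> _; have := @corner_not_counted R c.+2 cut_poly s ltac:(lia) cut_convex ord0.
by rewrite /cut_poly /=.
Qed.

End Cut.

Lemma card_is_proper_sub (T : eqType) (S S' : set T) k q : card_is S k ->
  S' `<=` S -> S q -> ~ S' q -> exists2 r, (r < k)%N & card_is S' r.
Proof.
move=> [s [us [ms sk]]] sub Sq nSq.
pose s' := seq.filter (fun x => `[< S' x >]) s.
exists (size s'); last first.
  exists s'; split; [exact: filter_uniq|split=> //].
  move=> x; rewrite mem_filter; split; first by case/andP => /asboolP.
  by move=> h; rewrite (asboolT h) /=; apply/ms/sub.
rewrite size_filter -sk -(count_predC (fun x => `[< S' x >]) s) -addn1 leq_add2l.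
rewrite -has_count; apply/hasP; exists q; first exact/ms.
by rewrite /= (asboolF nSq).
Qed.

Section Main.
Variables (R : realType) (n : nat) (A : 'I_n -> line R) (m : nat) (V : 'I_m -> R * R).
Variables (s : R) (sigma : 'I_m -> 'I_n).
Hypothesis A_gp : bounded_general_position A.
Hypothesis m_gt2 : (2 < m)%N.
Hypothesis V_convex : forall i k : 'I_m, k != i -> k != ordS i ->
  0 < orient s (V i) (V (ordS i)) (V k).
Hypothesis s_sign : s = 1 \/ s = -1.
Hypothesis V_vertex : forall i, is_vertex A (V i).
Hypothesis sigma_inj : injective sigma.
Hypothesis sigma_on : forall i,
  on_line (A (sigma i)) (V i) /\ on_line (A (sigma i)) (V (ordS i)).

Lemma side_orient_on_side (k : 'I_m) x : on_line (A (sigma k)) x ->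
  side_orient V s m_gt2 k x = 0.
Proof.
move=> hx; rewrite /side_orient /orient corner_ord corner_ordS.
case: A_gp => A_nz _; case: (sigma_on k) => h1 h2.
by rewrite (det2_collinear (A_nz (sigma k)) h1 h2 hx) mulr0.
Qed.

(* An interior point lies on no side line, and a point inside side [i] lies on
   no side line but [sigma i]. *)
Lemma counted_new_line x : counted A V x ->
  exists L, on_line (A L) x /\ forall k, L != sigma k.
Proof.
case=> [[i1 [i2 [ne [h1 h2]]]] [x_int|[i [t [/andP [t0 t1] ex]]]]].
  exists i1; split => // k; apply/eqP => e.
  have := side_orient_interior m_gt2 V_convex k x_int.
  by rewrite side_orient_on_side ?ltxx // -e.
pose L := if i1 != sigma i then i1 else i2.
have L_on : on_line (A L) x by rewrite /L; case: ifP.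
have Li : L != sigma i by rewrite /L; case: ifP => // /negbFE /eqP <-; rewrite eq_sym.
exists L; split => // k; case: (eqVneq k i) => [-> //|ki]; apply/eqP => e.
have := @side_orient_open_side R m V s m_gt2 V_convex k i t.
rewrite !corner_ord corner_ordS -ex side_orient_on_side -?e // ltxx.
by rewrite !modn_small // eq_sym => /(_ ki); rewrite t0 t1 => /(_ isT).
Qed.

Lemma new_line_off_corners L : (forall k, L != sigma k) ->
  forall k : 'I_m, lval (A L) (V k) != 0.
Proof.
move=> L_new k; apply/eqP => /on_lineE Lk.
have h2 : on_line (A (sigma (ord_pred k))) (V k).
  by rewrite -{2}(ord_predK k); apply: (sigma_on _).2.
have nk : sigma k != sigma (ord_pred k).
  by rewrite (inj_eq sigma_inj) -{1}(ord_predK k) ordS_neq //; lia.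
case: A_gp => _ [_ no3].
exact: (no3 _ _ _ _ (L_new k) nk (L_new _) Lk (sigma_on k).1 h2).
Qed.

Lemma counted_hull x : counted A V x -> hull V x.
Proof.
case=> _ [x_int|[i [t [/andP [t0 t1] ->]]]]; first exact: nbhs_singleton x_int.
by apply: hull_lerp; rewrite ?ltW //; apply: hull_corner.
Qed.

Lemma new_line_separates L x : on_line (A L) x -> hull V x ->
  (forall k, lval (A L) (V k) != 0) ->
  (exists k, lval (A L) (V k) < 0) /\ (exists k, 0 < lval (A L) (V k)).
Proof.
move=> /on_lineE Lx xV L_nz; split.
  case: (boolP [exists k, lval (A L) (V k) < 0]) => [/existsP //|/existsPn neg].
  have : 0 < lval (A L) x.
    by apply: hull_lval_gt0 xV => k; rewrite lt_neqAle eq_sym L_nz /= leNgt neg.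
  by rewrite Lx ltxx.
case: (boolP [exists k, 0 < lval (A L) (V k)]) => [/existsP //|/existsPn pos].
have : 0 < lval (line_opp (A L)) x.
  apply: hull_lval_gt0 xV => k.
  by rewrite lval_opp oppr_gt0 lt_neqAle L_nz /= leNgt pos.
by rewrite lval_opp Lx oppr0 ltxx.
Qed.

Lemma line_sign_choice L (i0 : 'I_m) : (forall k, lval (A L) (V k) != 0) ->
  (exists k, lval (A L) (V k) < 0) -> (exists k, 0 < lval (A L) (V k)) ->
  exists2 ep : R, ep != 0 & 0 < ep * lval (A L) (V i0) /\
    exists k, ep * lval (A L) (V k) < 0.
Proof.
move=> L_nz [kn kn_neg] [kp kp_pos].
case: (ltP 0 (lval (A L) (V i0))) => hi0.
  by exists 1; rewrite ?oner_eq0 // mul1r; split => //; exists kn; rewrite mul1r.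
exists (-1); rewrite ?oppr_eq0 ?oner_eq0 // mulN1r oppr_gt0 lt_neqAle L_nz hi0.
by split => //; exists kp; rewrite mulN1r oppr_lt0.
Qed.

(* A sign change would put the crossing point, a vertex of [G], inside the edge. *)
Lemma edge_same_side L ep (i0 : 'I_m) : (forall k, L != sigma k) -> ep != 0 ->
  (forall x, is_vertex A x -> ~ open_seg (V i0) (V (ordS i0)) x) ->
  (forall k, height A V L ep m_gt2 k != 0) ->
  0 < height A V L ep m_gt2 i0 -> 0 < height A V L ep m_gt2 i0.+1.
Proof.
move=> L_new ep0 no_vertex F_nz F_i0; rewrite lt_neqAle eq_sym F_nz /= leNgt.
apply/negP => F_i0S.
have change : height A V L ep m_gt2 i0 * height A V L ep m_gt2 i0.+1 < 0.
  by rewrite pmulr_rlt0.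
apply: (no_vertex _ (crossing_vertex sigma_on L_new ep0 change)).
have /andP [u0 u1] := cut_param01 change.
exists (cut_param A V L ep m_gt2 i0); split; first by rewrite u0 u1.
by rewrite /crossing corner_ord corner_ordS.
Qed.

Lemma cut_polygon_exists (k : nat) (a b : R * R) (i0 : 'I_m) :
  card_is (counted A V) k -> (0 < k)%N -> (forall x, is_vertex A x -> ~ open_seg a b x) ->
  (V i0 = a /\ V (ordS i0) = b) \/ (V i0 = b /\ V (ordS i0) = a) ->
  exists (m' : nat) (W : 'I_m' -> R * R) (r : nat),
    (m' <= m.+1)%N /\ G_polygon A W /\ is_side W a b /\
    vertex_number A W r /\ (r < k)%N.
Proof.
move=> V_card k_gt0 ab_edge ab_side.
have [x Vx] : exists x, counted A V x.
  case: V_card => [[|x sl] [_ [mem sz]]]; first by move: k_gt0; rewrite -sz.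
  by exists x; apply/mem; rewrite mem_head.
have [L [xL L_new]] := counted_new_line Vx.
have L_nz := new_line_off_corners L_new.
have [neg pos] := new_line_separates xL (counted_hull Vx) L_nz.
have [ep ep0 [F_i0 F_neg]] := line_sign_choice i0 L_nz neg pos.
set F := height A V L ep m_gt2.
have F_nz l : F l != 0 by rewrite mulf_neq0 // L_nz.
have F_periodic l l' : (l %% m = l' %% m)%N -> F l = F l'.
  by move=> e; rewrite /F /height (corner_mod _ m_gt2 e).
have F_i0' : 0 < F i0 by rewrite /F /height corner_ord.
have F_i0S : 0 < F i0.+1.
  apply: edge_same_side F_i0' => // y yv.
  by case: ab_side => -[-> ->] h; [|have {}h := open_seg_sym h]; exact: ab_edge yv h.
have F_neg' : exists l, F l < 0.
  by case: F_neg => l hl; exists l; rewrite /F /height corner_ord.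
have [j [c [/andP [c_gt1 c_lt] F_j F_jc F_run [e e_lt e_eq]]]] :=
  positive_run (ltn_ord i0) F_nz F_periodic F_i0' F_i0S F_neg'.
have [r r_lt W_card] := card_is_proper_sub V_card
  (counted_cut_sub V_convex ep0 c_gt1 c_lt F_j F_jc F_run)
  (entry_counted sigma_on L_new ep0 c_gt1 c_lt F_j F_jc F_run)
  (entry_not_counted V_convex ep0 c_gt1 c_lt F_j F_jc F_run).
exists c.+2, (cut_poly A V L ep j (c := c) m_gt2), r; split; first lia.
split.
  exact: (cut_polygon V_convex s_sign V_vertex sigma_inj sigma_on L_new ep0
            c_gt1 c_lt F_j F_jc F_run).
split => //; have [i [Wi WiS]] := cut_poly_run_side ep0 c_gt1 c_lt F_j F_jc e_lt.
exists i; rewrite Wi WiS e_eq -addSn.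
rewrite (corner_mod _ _ (modnDr i0 m)) (corner_mod _ _ (modnDr i0.+1 m)) corner_ord corner_ordS.
by case: ab_side => -[-> ->]; [left|right].
Qed.

End Main.

Theorem lemma1p8 (R : realType) (n : nat) (A : 'I_n -> line R)
  (m : nat) (V : 'I_m -> R * R) (k : nat) (a b : R * R) :
  bounded_general_position A ->
  G_polygon A V ->
  ~ is_alcove A (hull V) ->
  vertex_number A V k -> (0 < k)%N ->
  is_edge A a b -> is_side V a b ->
  exists (m' : nat) (W : 'I_m' -> R * R) (r : nat),
    (m' <= m.+1)%N /\ G_polygon A W /\ is_side W a b /\
    vertex_number A W r /\ (r < k)%N.
Proof.
move=> A_gp [[m_gt2 [s [s_sign V_convex]]] [V_vertex [sigma [sigma_inj sigma_on]]]] _.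
move=> V_card k_gt0 [_ [_ [_ [_ [_ [_ ab_edge]]]]]] [i0 ab_side].
exact: (cut_polygon_exists A_gp m_gt2 V_convex s_sign V_vertex sigma_inj sigma_on
          V_card k_gt0 ab_edge ab_side).
Qed.
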